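(* Let $G$ be a finite simple graph without isolated vertices, and consider a position of the Disjoint Domination Game (or its biased $(d:s)$ variant) on $G$ in which no vertex has a monochromatic closed neighborhood. Let $C$ be a connected component of $G$, and suppose there are an uncolored vertex $u\in V(C)$ and a color $c\in\{p,b\}$ such that coloring $u$ with $c$ is a legal move and, after it, every vertex of $C$ is dominated by both $V_p$ and $V_b$. Then no sequence of legal moves from the current position results in a vertex $v\in V(C)$ with $N[v]\subseteq V_p$ or $N[v]\subseteq V_b$.
   Context: $N[v]$ denotes the closed neighborhood of $v$. In the Disjoint Domination Game, vertices are colored one at a time with colors $p$ or $b$ (either player may use either color); $V_p,V_b$ are the current sets of vertices of each color; coloring a vertex $v$ with color $c$ is legal iff $v$ is uncolored and some $w\in N[v]$ satisfies $N[w]\cap V_c=\emptyset$ (before the coloring). A vertex $x$ is dominated by a set $S$ if $N[x]\cap S\neq\emptyset$. *)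

From mathcomp Require Import all_boot.
Set Implicit Arguments. Unset Strict Implicit. Unset Printing Implicit Defensive.

(* A finite simple graph: vertex type T : finType, edge relation e : rel T,
   symmetric and irreflexive (hypotheses of the theorem). *)

Inductive color := cp | cb.

Section DDG.
Variables (T : finType) (e : rel T).

Definition cnbhd (v : T) : {set T} := [set w | (w == v) || e v w].

Definition position := ({set T} * {set T})%type.

Definition colset (pos : position) (c : color) : {set T} :=
  match c with cp => pos.1 | cb => pos.2 end.

Definition dominated (S : {set T}) (x : T) : bool :=
  cnbhd x :&: S != set0.

Definition legal (pos : position) (v : T) (c : color) : bool :=
  (v \notin pos.1 :|: pos.2) &&
  [exists w in cnbhd v, cnbhd w :&: colset pos c == set0].

Definition play (pos : position) (v : T) (c : color) : position :=
  match c with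
  | cp => (v |: pos.1, pos.2)
  | cb => (pos.1, v |: pos.2)
  end.

Fixpoint play_seq (pos : position) (s : seq (T * color)) : position :=
  match s with
  | [::] => pos
  | (v, c) :: s' => play_seq (play pos v c) s'
  end.

Fixpoint legal_seq (pos : position) (s : seq (T * color)) : Prop :=
  match s with
  | [::] => True
  | (v, c) :: s' => legal pos v c /\ legal_seq (play pos v c) s'
  end.

Definition component (r : T) : {set T} := [set x | connect e r x].

End DDG.

From HB Require Import structures.
From mathcomp Require Import all_boot.
Set Implicit Arguments. Unset Strict Implicit. Unset Printing Implicit Defensive.

(* Let [d] be the color opposite to [c]. Coloring [u] with [c] adds nothing to
   [V_d], so every vertex of the component [C] is already dominated by [V_d].
   A [d]-move at [x] needs a vertex of [N[x]] whose neighborhood misses [V_d];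
   inside [C] there is none, and [V_d] only grows, so no vertex of [C] is ever
   colored [d] again. Hence [N[v] \subset V_d] could only hold if it held
   already, and [N[v] \subset V_c] is ruled out by the [d]-colored vertex of
   [N[v]], since the two color classes stay disjoint. *)

Definition opposite_color (c : color) : color :=
  if c is cp then cb else cp.

Definition bool_of_color (c : color) : bool := if c is cp then true else false.
Definition color_of_bool (b : bool) : color := if b then cp else cb.
Lemma bool_of_colorK : cancel bool_of_color color_of_bool. Proof. by case. Qed.
HB.instance Definition _ := Equality.copy color (can_type bool_of_colorK).

Section DisjointDominationGame.
Variables (T : finType) (e : rel T).
Implicit Types (pos : position T) (A B : {set T}) (c d : color).

Lemma colset_play pos v c d :
  colset (play pos v c) d = if c == d then v |: colset pos d else colset pos d.
Proof. by case: c; case: d. Qed.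

Lemma colset_play_seq_sub s pos d :
  colset pos d \subset colset (play_seq pos s) d.
Proof.
elim: s pos => [|[v c] s IHs] pos /=; first exact: subxx.
apply: subset_trans (IHs _); rewrite colset_play.
by case: (c == d); [exact: subsetUr | exact: subxx].
Qed.

Lemma colset_disjoint pos c d :
  [disjoint pos.1 & pos.2] -> c != d -> [disjoint colset pos c & colset pos d].
Proof. by case: c; case: d => //= ? _; rewrite disjoint_sym. Qed.

Lemma disjoint_play pos v c :
  v \notin pos.1 :|: pos.2 -> [disjoint pos.1 & pos.2] ->
  [disjoint (play pos v c).1 & (play pos v c).2].
Proof.
rewrite in_setU negb_or => /andP[v1 v2] dis.
case: c => /=; last rewrite disjoint_sym.
all: rewrite disjoints_subset subUset sub1set !inE ?v1 ?v2 -disjoints_subset //.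
by rewrite disjoint_sym.
Qed.

Lemma disjoint_play_seq s pos :
  legal_seq e pos s -> [disjoint pos.1 & pos.2] ->
  [disjoint (play_seq pos s).1 & (play_seq pos s).2].
Proof.
elim: s pos => [|[v c] s IHs] pos //= [/andP[uncol _] legal_s] dis.
exact/IHs/disjoint_play.
Qed.

Lemma dominatedS A B x : A \subset B -> dominated e A x -> dominated e B x.
Proof.
move=> sAB; apply: contraNN => /eqP nAB.
by rewrite -subset0 -nAB setIS.
Qed.

Lemma legal_dominated pos v d :
  {in cnbhd e v, forall w, dominated e (colset pos d) w} -> ~~ legal e pos v d.
Proof.
move=> domN; rewrite negb_and; apply/orP; right.
apply/existsP => -[w /andP[wN /eqP noDom]].
by have := domN w wN; rewrite /dominated noDom eqxx.
Qed.

Section ClosedSet.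
Variables (S : {set T}) (d : color).
Hypothesis S_closed : forall x, x \in S -> cnbhd e x \subset S.

Lemma play_seq_colset_frozen s pos :
  legal_seq e pos s -> {in S, forall w, dominated e (colset pos d) w} ->
  colset (play_seq pos s) d :&: S = colset pos d :&: S.
Proof.
elim: s pos => [|[v c] s IHs] pos //= [legal_v legal_s] domS.
have domS' : {in S, forall w, dominated e (colset (play pos v c) d) w}.
  move=> w wS; apply: dominatedS (domS w wS).
  exact: (colset_play_seq_sub [:: (v, c)]).
rewrite IHs // colset_play; case: eqP => [cd|_] //; subst c.
have vNS : v \notin S.
  apply: contraL legal_v => vS; apply: legal_dominated => w wN.
  exact: domS (subsetP (S_closed vS) w wN).
by apply/setP => x; rewrite !inE; case: eqP => // ->; rewrite (negbTE vNS) !andbF.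
Qed.

Lemma no_monochromatic_nbhd_play_seq s pos v :
  [disjoint pos.1 & pos.2] -> legal_seq e pos s ->
  (forall x, ~~ (cnbhd e x \subset colset pos d)) ->
  {in S, forall w, dominated e (colset pos d) w} ->
  v \in S -> forall c, ~~ (cnbhd e v \subset colset (play_seq pos s) c).
Proof.
move=> dis legal_s no_mono domS vS c.
have [<-|cd] := eqVneq d c.
  apply: contraNN (no_mono v) => Nsub.
  have : cnbhd e v \subset colset (play_seq pos s) d :&: S.
    by rewrite subsetI Nsub S_closed.
  by rewrite (play_seq_colset_frozen legal_s domS) subsetI => /andP[].
have /set0Pn[y /setIP[yN yd]] := domS v vS.
apply/negP => /subsetP/(_ y yN) yc.
have yd' := subsetP (colset_play_seq_sub s pos d) y yd.
have := colset_disjoint (disjoint_play_seq legal_s dis) cd.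
by move/disjointFr/(_ yd'); rewrite yc.
Qed.

End ClosedSet.

Lemma cnbhd_sub_component r x :
  x \in component e r -> cnbhd e x \subset component e r.
Proof.
rewrite inE => rx; apply/subsetP => w; rewrite !inE => /orP[/eqP -> //|xw].
exact: connect_trans rx (connect1 xw).
Qed.

End DisjointDominationGame.

Theorem lemma9 (T : finType) (e : rel T)
  (e_sym : symmetric e) (e_irr : irreflexive e)
  (no_isolated : forall v : T, exists w, e v w)
  (Vp Vb : {set T}) (disj : [disjoint Vp & Vb])
  (no_mono : forall v : T,
      ~~ (cnbhd e v \subset Vp) /\ ~~ (cnbhd e v \subset Vb))
  (r : T) (u : T) (c : color)
  (u_in : u \in component e r)
  (u_uncol : u \notin Vp :|: Vb)
  (u_legal : legal e (Vp, Vb) u c)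
  (all_dom : forall x, x \in component e r ->
      dominated e (play (Vp, Vb) u c).1 x /\
      dominated e (play (Vp, Vb) u c).2 x)
  (s : seq (T * color)) (s_legal : legal_seq e (Vp, Vb) s) :
  forall v, v \in component e r ->
    ~~ (cnbhd e v \subset (play_seq (Vp, Vb) s).1) /\
    ~~ (cnbhd e v \subset (play_seq (Vp, Vb) s).2).
Proof.
move=> v vC; pose d := opposite_color c.
have no_mono_d x : ~~ (cnbhd e x \subset colset (Vp, Vb) d).
  by have [] := no_mono x; rewrite /d; case: (c).
have dom_d : {in component e r, forall w, dominated e (colset (Vp, Vb) d) w}.
  move=> w /all_dom; have -> : colset (Vp, Vb) d = colset (play (Vp, Vb) u c) d.
    by rewrite colset_play /d; case: (c).
  by case: (d) => -[].
have no_sub := no_monochromatic_nbhd_play_seq (@cnbhd_sub_component T e r)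
  (disj : [disjoint (Vp, Vb).1 & (Vp, Vb).2]) s_legal no_mono_d dom_d vC.
by split; [exact: (no_sub cp) | exact: (no_sub cb)].
Qed.
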